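(* Let $r,K,\alpha,\phi,c,m_1,m_2,\lambda,a,d,\delta,\gamma,\sigma,\eta$ be positive constants with $\phi<1$ and $m_1>m_2$, and consider the system \[ \begin{cases} \dot X = rX\left(1-\frac{X}{K}\right)-\frac{\alpha XS}{c+X}-\frac{\phi\alpha XI}{c+X},\\[1mm] \dot S = \frac{m_1\alpha XS}{c+X}-\frac{\lambda AS}{a+A}-dS,\\[1mm] \dot I = \frac{m_2\phi\alpha XI}{c+X}+\frac{\lambda AS}{a+A}-(d+\delta)I,\\[1mm] \dot A = \gamma+\sigma(S+I)-\eta A. \end{cases} \] Assume $d+\delta<\frac{m_2\phi\alpha K}{c+K}$, and let $E_2=(\bar X,0,\bar I,\bar A)$ be the susceptible-pest-free equilibrium, where \[ \bar X=\frac{c(d+\delta)}{m_2\phi\alpha-(d+\delta)},\qquad \bar I=\frac{r(c+\bar X)(K-\bar X)}{\phi\alpha K},\qquad \bar A=\frac{\gamma+\sigma\bar I}{\eta}. \] Then $E_2$ is locally asymptotically stable if \[ \frac{m_1(d+\delta)(a+\bar A)}{(a+\bar A)(\lambda+d)-\lambda a}<m_2\phi<\frac{(K+c)(d+\delta)}{\alpha(K-c)}. \]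
   Context: The assumption $d+\delta<\frac{m_2\phi\alpha K}{c+K}$ is the paper's condition for existence of $E_2$ (equivalently $0<\bar X<K$). *)

From Stdlib Require Import Reals.
From Coquelicot Require Import Coquelicot.
Open Scope R_scope.

Record params := mkParams {
  p_r : R; p_K : R; p_alpha : R; p_phi : R; p_c : R; p_m1 : R; p_m2 : R;
  p_lambda : R; p_a : R; p_d : R; p_delta : R; p_gamma : R; p_sigma : R;
  p_eta : R }.

Definition fX (p : params) (X S I A : R) : R :=
  p_r p * X * (1 - X / p_K p) - p_alpha p * X * S / (p_c p + X)
  - p_phi p * p_alpha p * X * I / (p_c p + X).

Definition fS (p : params) (X S I A : R) : R :=
  p_m1 p * p_alpha p * X * S / (p_c p + X) - p_lambda p * A * S / (p_a p + A)
  - p_d p * S.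

Definition fI (p : params) (X S I A : R) : R :=
  p_m2 p * p_phi p * p_alpha p * X * I / (p_c p + X)
  + p_lambda p * A * S / (p_a p + A) - (p_d p + p_delta p) * I.

Definition fA (p : params) (X S I A : R) : R :=
  p_gamma p + p_sigma p * (S + I) - p_eta p * A.

Definition right_cont0 (f : R -> R) : Prop :=
  forall eps, 0 < eps -> exists del, 0 < del /\
    forall t, 0 <= t < del -> Rabs (f t - f 0) < eps.

Definition is_solution (p : params) (X S I A : R -> R) : Prop :=
  (forall t, 0 < t ->
     is_derive X t (fX p (X t) (S t) (I t) (A t)) /\
     is_derive S t (fS p (X t) (S t) (I t) (A t)) /\
     is_derive I t (fI p (X t) (S t) (I t) (A t)) /\
     is_derive A t (fA p (X t) (S t) (I t) (A t))) /\
  right_cont0 X /\ right_cont0 S /\ right_cont0 I /\ right_cont0 A.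

Definition dist4 (x1 x2 x3 x4 y1 y2 y3 y4 : R) : R :=
  sqrt ((x1 - y1)^2 + (x2 - y2)^2 + (x3 - y3)^2 + (x4 - y4)^2).

Definition loc_asymp_stable (p : params) (e1 e2 e3 e4 : R) : Prop :=
  (forall eps, 0 < eps -> exists del, 0 < del /\
     forall X S I A, is_solution p X S I A ->
       dist4 (X 0) (S 0) (I 0) (A 0) e1 e2 e3 e4 < del ->
       forall t, 0 <= t -> dist4 (X t) (S t) (I t) (A t) e1 e2 e3 e4 < eps) /\
  (exists del, 0 < del /\
     forall X S I A, is_solution p X S I A ->
       dist4 (X 0) (S 0) (I 0) (A 0) e1 e2 e3 e4 < del ->
       is_lim X p_infty e1 /\ is_lim S p_infty e2 /\
       is_lim I p_infty e3 /\ is_lim A p_infty e4).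

Definition Xbar (p : params) : R :=
  p_c p * (p_d p + p_delta p) / (p_m2 p * p_phi p * p_alpha p - (p_d p + p_delta p)).
Definition Ibar (p : params) : R :=
  p_r p * (p_c p + Xbar p) * (p_K p - Xbar p) / (p_phi p * p_alpha p * p_K p).
Definition Abar (p : params) : R :=
  (p_gamma p + p_sigma p * Ibar p) / p_eta p.

(* Near E2 write the system in the error coordinates x = X - Xbar, s = S,
   i = I - Ibar, y = A - Abar.  The upper stability bound amounts to
   K - c < 2 Xbar, which makes the prey equation self-damping, and the lower bound
   makes the susceptibles decay, s' = h s with h < 0 at E2.  Take the quadratic
   form V = e0 x^2 + b0 i^2 + 2 eps x i + k s^2 + mu y^2, with e0, b0 cancelling the
   x-i coupling at E2, eps and mu small and k large.  Near E2 the coefficients of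
   the error system stay close to their equilibrium values, and then
   V' <= - kappa V.  A continuous-induction argument keeps a solution starting in a
   small sublevel set of V inside it, where V decays exponentially; as V is
   equivalent to the squared distance to E2, this is stability and attractivity. *)

From Stdlib Require Import Reals Lra Psatz Classical.
From Coquelicot Require Import Coquelicot.
Open Scope R_scope.

Lemma locally_pos x : 0 < x -> locally x (fun y => 0 < y).
Proof.
  intros Hx; exists (mkposreal x Hx); intros y Hy.
  change (Rabs (y - x) < x) in Hy; apply Rabs_def2 in Hy; lra.
Qed.

Lemma ex_derive_locally_near (f : R -> R) x eps :
  ex_derive f x -> 0 < eps -> locally x (fun y => Rabs (f y - f x) < eps).
Proof.
  intros Hf Heps.
  exact (ex_derive_continuous f x Hf _ (locally_ball (f x) (mkposreal eps Heps))).
Qed.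

Lemma is_derive_sub_const (f : R -> R) x l k :
  is_derive f x l -> is_derive (fun t => f t - k) x l.
Proof.
  intros Hf; auto_derive; [eexists; exact Hf|].
  replace (Derive (fun t => f t) x) with l by (symmetry; apply is_derive_unique, Hf); ring.
Qed.

Lemma exp_neg_mul_le_1 k t : 0 <= k -> 0 <= t -> exp (- k * t) <= 1.
Proof.
  intros Hk Ht; rewrite <- exp_0.
  destruct (Rlt_or_le (- k * t) 0) as [Hneg|Hnonneg].
  - left; apply exp_increasing, Hneg.
  - right; f_equal; nra.
Qed.

Lemma Rabs_lt_of_sq_lt u e : 0 < e -> u^2 < e^2 -> Rabs u < e.
Proof. intros He Hu; unfold Rabs; destruct (Rcase_abs u); nra. Qed.

Lemma is_lim_of_sq_le_exp (f : R -> R) (l C k : R) :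
  0 < k -> (forall t, 0 <= t -> (f t - l)^2 <= C * exp (- k * t)) ->
  is_lim f p_infty l.
Proof.
  intros Hk Hf; apply is_lim_spec; intros [eps Heps]; simpl.
  pose proof (Rabs_pos C); pose proof (Rle_abs C).
  set (q := eps^2 / (Rabs C + 1)).
  assert (Hq : 0 < q) by (unfold q; apply Rdiv_lt_0_compat; nra).
  exists (Rmax 0 (- ln q / k)); intros t Ht.
  pose proof (Rmax_l 0 (- ln q / k)); pose proof (Rmax_r 0 (- ln q / k)).
  assert (Hexp : exp (- k * t) < q).
  { rewrite <- (exp_ln q Hq); apply exp_increasing.
    replace (ln q) with (k * (ln q / k)) by (field; lra).
    assert (k * (- ln q / k) < k * t) by (apply Rmult_lt_compat_l; lra).
    replace (- ln q / k) with (- (ln q / k)) in * by (field; lra); lra. }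
  apply Rabs_lt_of_sq_lt; [exact Heps|].
  apply Rle_lt_trans with (C * exp (- k * t)); [apply Hf; lra|].
  apply Rle_lt_trans with (Rabs C * q); [pose proof (exp_pos (- k * t)); nra|].
  apply (Rmult_lt_reg_r (Rabs C + 1)); [lra|].
  unfold q; field_simplify; nra.
Qed.

Lemma Rabs_mult_sub_lt u u0 v v0 eta : 0 < eta ->
  Rabs (u - u0) < eta / (2 * (Rabs v0 + 1)) ->
  Rabs (v - v0) < Rmin 1 (eta / (2 * (Rabs u0 + 1))) ->
  Rabs (u * v - u0 * v0) < eta.
Proof.
  intros Heta Hu Hv.
  pose proof (Rmin_l 1 (eta / (2 * (Rabs u0 + 1))));
  pose proof (Rmin_r 1 (eta / (2 * (Rabs u0 + 1))));
  pose proof (Rabs_pos u0); pose proof (Rabs_pos v0); pose proof (Rabs_pos (u - u0)).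
  replace (u * v - u0 * v0) with ((u - u0) * v + u0 * (v - v0)) by ring.
  assert (Hv_bound : Rabs v <= Rabs v0 + 1).
  { replace v with (v0 + (v - v0)) at 1 by ring.
    eapply Rle_trans; [apply Rabs_triang|]; lra. }
  assert (Rabs (u - u0) * Rabs v < eta / 2).
  { apply Rle_lt_trans with (Rabs (u - u0) * (Rabs v0 + 1));
      [apply Rmult_le_compat_l; lra|].
    replace (eta / 2) with (eta / (2 * (Rabs v0 + 1)) * (Rabs v0 + 1)) by (field; lra).
    apply Rmult_lt_compat_r; lra. }
  assert (Rabs u0 * Rabs (v - v0) < eta / 2).
  { apply Rle_lt_trans with (Rabs u0 * (eta / (2 * (Rabs u0 + 1))));
      [apply Rmult_le_compat_l; lra|].
    apply (Rmult_lt_reg_r (2 * (Rabs u0 + 1))); [lra|].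
    replace (Rabs u0 * (eta / (2 * (Rabs u0 + 1))) * (2 * (Rabs u0 + 1)))
      with (Rabs u0 * eta) by (field; lra).
    nra. }
  eapply Rle_lt_trans; [apply Rabs_triang|]; rewrite !Rabs_mult; lra.
Qed.

Lemma right_cont0_filterlim (f : R -> R) :
  right_cont0 f <-> filterlim f (within (Rle 0) (locally 0)) (locally (f 0)).
Proof.
  split.
  - intros Hf P [eps HP].
    destruct (Hf eps (cond_pos eps)) as [del [Hdel Hnear]].
    exists (mkposreal del Hdel); intros t Ht Ht0; apply HP, Hnear.
    change (Rabs (t - 0) < del) in Ht; pose proof (Rle_abs (t - 0)); lra.
  - intros Hf eps Heps.
    destruct (Hf _ (locally_ball (f 0) (mkposreal eps Heps))) as [del Hdel].
    exists del; split; [apply cond_pos|]; intros t [Ht0 Ht].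
    apply (Hdel t); [|exact Ht0].
    change (Rabs (t - 0) < del); rewrite Rminus_0_r, Rabs_pos_eq; lra.
Qed.

Lemma right_cont0_const (k : R) : right_cont0 (fun _ => k).
Proof. apply right_cont0_filterlim, filterlim_const. Qed.

Lemma right_cont0_plus (f g : R -> R) :
  right_cont0 f -> right_cont0 g -> right_cont0 (fun t => f t + g t).
Proof.
  rewrite !right_cont0_filterlim; intros Hf Hg.
  exact (filterlim_comp_2 _ _ _ Hf Hg (@filterlim_plus _ R_NormedModule (f 0) (g 0))).
Qed.

Lemma right_cont0_mult (f g : R -> R) :
  right_cont0 f -> right_cont0 g -> right_cont0 (fun t => f t * g t).
Proof.
  rewrite !right_cont0_filterlim; intros Hf Hg.
  exact (filterlim_comp_2 _ _ _ Hf Hg (@filterlim_mult R_AbsRing (f 0) (g 0))).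
Qed.

Lemma right_cont0_pow (f : R -> R) n : right_cont0 f -> right_cont0 (fun t => f t ^ n).
Proof.
  intros Hf; induction n as [|n IH]; simpl;
    [apply right_cont0_const|apply right_cont0_mult; assumption].
Qed.

Lemma right_cont0_sub_const (f : R -> R) k : right_cont0 f -> right_cont0 (fun t => f t - k).
Proof.
  intros Hf; apply (right_cont0_plus f (fun _ => - k)); [exact Hf|apply right_cont0_const].
Qed.

Lemma right_cont0_continuous (f : R -> R) : continuous f 0 -> right_cont0 f.
Proof.
  intros Hf; apply right_cont0_filterlim.
  exact (filterlim_filter_le_1 _ (filter_le_within _) Hf).
Qed.

Ltac right_cont0_tac :=
  match goal with
  | |- right_cont0 (fun t => @?f t + @?g t) =>
      apply (right_cont0_plus f g); right_cont0_tac
  | |- right_cont0 (fun t => @?f t * @?g t) =>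
      apply (right_cont0_mult f g); right_cont0_tac
  | |- right_cont0 (fun t => @?f t ^ ?n) =>
      apply (right_cont0_pow f n); right_cont0_tac
  | |- right_cont0 (fun t => @?f t - ?k) =>
      apply (right_cont0_sub_const f k); right_cont0_tac
  | |- right_cont0 (fun _ => _) => first [assumption | apply right_cont0_const]
  | |- right_cont0 _ => assumption
  end.

Lemma right_cont0_ge (w : R -> R) (c T : R) :
  0 < T -> right_cont0 w -> (forall a, 0 < a < T -> c <= w a) -> c <= w 0.
Proof.
  intros HT Hw Hc.
  destruct (Rle_or_lt c (w 0)) as [Hle|Hlt]; [exact Hle|exfalso].
  destruct (Hw (c - w 0)) as [del [Hdel Hnear]]; [lra|].
  pose proof (Rmin_l (del / 2) (T / 2)); pose proof (Rmin_r (del / 2) (T / 2)).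
  assert (0 < Rmin (del / 2) (T / 2)) by (apply Rmin_glb_lt; lra).
  specialize (Hnear (Rmin (del / 2) (T / 2)) ltac:(lra)).
  specialize (Hc (Rmin (del / 2) (T / 2)) ltac:(lra)).
  apply Rabs_def2 in Hnear; lra.
Qed.

Lemma real_induction (P : R -> Prop) :
  (forall T, 0 <= T -> (forall s, 0 <= s < T -> P s) -> P T) ->
  (forall T, 0 <= T -> (forall s, 0 <= s <= T -> P s) ->
     exists del, 0 < del /\ forall s, T < s < T + del -> P s) ->
  forall t, 0 <= t -> P t.
Proof.
  intros Hclosed Hopen t Ht.
  set (E := fun u => u <= t /\ forall s, 0 <= s <= u -> P s).
  assert (E0 : E 0).
  { split; [exact Ht|]; intros s Hs; replace s with 0 by lra.
    apply Hclosed; [lra|]; intros; lra. }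
  destruct (completeness E) as [T [HT_ub HT_least]].
  { exists t; intros u [Hu _]; exact Hu. }
  { exists 0; exact E0. }
  assert (HT0 : 0 <= T) by (apply HT_ub, E0).
  assert (HTt : T <= t) by (apply HT_least; intros u [Hu _]; exact Hu).
  assert (Hbelow : forall s, 0 <= s < T -> P s).
  { intros s Hs; destruct (classic (P s)) as [HPs|HnPs]; [exact HPs|exfalso].
    enough (T <= s) by lra.
    apply HT_least; intros u [_ Hu].
    destruct (Rle_or_lt u s) as [Hus|Hsu]; [exact Hus|].
    exfalso; apply HnPs, Hu; lra. }
  assert (Hupto : forall s, 0 <= s <= T -> P s).
  { intros s Hs; destruct (Rle_lt_or_eq_dec s T (proj2 Hs)) as [Hlt| ->].
    - apply Hbelow; lra.
    - apply Hclosed; assumption. }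
  destruct (Rle_lt_or_eq_dec T t HTt) as [HTlt| <-]; [|apply Hupto; lra].
  exfalso.
  destruct (Hopen T HT0 Hupto) as [del [Hdel Hafter]].
  pose proof (Rmin_l (T + del / 2) t); pose proof (Rmin_r (T + del / 2) t).
  assert (HTu : T < Rmin (T + del / 2) t) by (apply Rmin_glb_lt; lra).
  enough (Hu : E (Rmin (T + del / 2) t)) by (pose proof (HT_ub _ Hu); lra).
  split; [lra|]; intros s Hs.
  destruct (Rle_or_lt s T); [apply Hupto; lra|apply Hafter; lra].
Qed.

(** * Exponential decay under a differential inequality *)

Section Decay.

Variables (v dv : R -> R) (m k : R).
Hypothesis k_pos : 0 < k.
Hypothesis v_deriv : forall t, 0 < t -> is_derive v t (dv t).
Hypothesis v_right_cont0 : right_cont0 v.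
Hypothesis v0_nonneg : 0 <= v 0.
Hypothesis dv_le : forall t, 0 < t -> v t < m -> dv t <= - k * v t.

(* [v t * exp (k t)] is nonincreasing as long as [v] stays below [m]. *)
Lemma decay_while_below T :
  0 < T -> (forall s, 0 <= s < T -> v s < m) -> v T <= v 0 * exp (- k * T).
Proof.
  intros HT Hbelow.
  set (w := fun s => v s * exp (k * s)).
  assert (Hw_deriv : forall s, 0 < s ->
    is_derive w s ((dv s + k * v s) * exp (k * s))).
  { intros s Hs; unfold w; auto_derive; [eexists; apply v_deriv, Hs|].
    replace (Derive (fun x : R => v x) s) with (dv s)
      by (symmetry; apply is_derive_unique, v_deriv, Hs); ring. }
  assert (Hw_mono : forall a, 0 < a < T -> w T <= w a).
  { intros a Ha.
    destruct (MVT_cor2 w (fun s => (dv s + k * v s) * exp (k * s)) a T)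
      as [c [Hc Hac]]; [lra| |].
    { intros c Hc; apply is_derive_Reals, Hw_deriv; lra. }
    assert (Hc0 : 0 < c) by lra; assert (Hcm : v c < m) by (apply Hbelow; lra).
    pose proof (dv_le c Hc0 Hcm); pose proof (exp_pos (k * c)).
    assert (0 <= - (dv c + k * v c) * exp (k * c)) by (apply Rmult_le_pos; lra).
    nra. }
  assert (Hw0 : w T <= w 0).
  { apply (right_cont0_ge w (w T) T HT); [|exact Hw_mono].
    apply right_cont0_mult; [exact v_right_cont0|].
    apply right_cont0_continuous, (ex_derive_continuous (V := R_NormedModule)).
    auto_derive; auto. }
  unfold w in Hw0; rewrite Rmult_0_r, exp_0, Rmult_1_r in Hw0.
  replace (- k * T) with (- (k * T)) by ring; rewrite exp_Ropp.
  pose proof (exp_pos (k * T)).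
  apply Rmult_le_reg_r with (exp (k * T)); [lra|].
  rewrite Rmult_assoc, Rinv_l; lra.
Qed.

Lemma stays_below : v 0 < m -> forall t, 0 <= t -> v t < m.
Proof.
  intros Hv0; apply real_induction.
  - intros T HT Hbelow; destruct (Rle_lt_or_eq_dec 0 T HT) as [HTpos| <-]; [|exact Hv0].
    pose proof (decay_while_below T HTpos Hbelow).
    pose proof (exp_neg_mul_le_1 k T ltac:(lra) ltac:(lra)).
    nra.
  - intros T HT Hupto; specialize (Hupto T ltac:(lra)).
    destruct (Rle_lt_or_eq_dec 0 T HT) as [HTpos| <-].
    + destruct (ex_derive_locally_near v T (m - v T)) as [del Hdel]; [|lra|].
      { eexists; apply v_deriv, HTpos. }
      exists del; split; [apply cond_pos|]; intros s Hs.
      assert (Hball : Rabs (s - T) < del) by (rewrite Rabs_pos_eq; lra).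
      specialize (Hdel s Hball); apply Rabs_def2 in Hdel; lra.
    + destruct (v_right_cont0 (m - v 0)) as [del [Hdel Hnear]]; [lra|].
      exists del; split; [exact Hdel|]; intros s Hs.
      specialize (Hnear s ltac:(lra)); apply Rabs_def2 in Hnear; lra.
Qed.

Lemma exp_decay : v 0 < m -> forall t, 0 <= t -> v t <= v 0 * exp (- k * t).
Proof.
  intros Hv0 t Ht; destruct (Rle_lt_or_eq_dec 0 t Ht) as [Htpos| <-].
  - apply decay_while_below; [exact Htpos|]; intros s Hs; apply stays_below; lra.
  - rewrite Rmult_0_r, exp_0; lra.
Qed.

End Decay.

(** * Quadratic Lyapunov functions and local asymptotic stability *)

Definition sqnorm4 (x s i y : R) : R := x^2 + s^2 + i^2 + y^2.

Lemma sqnorm4_nonneg x s i y : 0 <= sqnorm4 x s i y.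
Proof.
  unfold sqnorm4; pose proof (pow2_ge_0 x); pose proof (pow2_ge_0 s);
  pose proof (pow2_ge_0 i); pose proof (pow2_ge_0 y); lra.
Qed.

Lemma sqnorm4_ge x s i y :
  x^2 <= sqnorm4 x s i y /\ s^2 <= sqnorm4 x s i y /\
  i^2 <= sqnorm4 x s i y /\ y^2 <= sqnorm4 x s i y.
Proof.
  unfold sqnorm4; pose proof (pow2_ge_0 x); pose proof (pow2_ge_0 s);
  pose proof (pow2_ge_0 i); pose proof (pow2_ge_0 y); lra.
Qed.

Lemma dist4_lt_iff x1 x2 x3 x4 y1 y2 y3 y4 del : 0 < del ->
  dist4 x1 x2 x3 x4 y1 y2 y3 y4 < del <->
  sqnorm4 (x1 - y1) (x2 - y2) (x3 - y3) (x4 - y4) < del^2.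
Proof.
  intros Hdel; unfold dist4; fold (sqnorm4 (x1 - y1) (x2 - y2) (x3 - y3) (x4 - y4)).
  pose proof (sqnorm4_nonneg (x1 - y1) (x2 - y2) (x3 - y3) (x4 - y4)).
  rewrite <- (sqrt_pow2 del) at 1 by lra.
  split; [apply sqrt_lt_0_alt|intros; apply sqrt_lt_1_alt; lra].
Qed.

Section LyapunovStability.

Variables (p : params) (e1 e2 e3 e4 : R) (V : R -> R -> R -> R -> R).
Variables (lam Lam kap m : R).
Hypotheses (lam_pos : 0 < lam) (kap_pos : 0 < kap) (m_pos : 0 < m).
Hypothesis V_bounds : forall x s i y,
  lam * sqnorm4 x s i y <= V x s i y <= Lam * sqnorm4 x s i y.
Hypothesis V_decay : forall X S I A, is_solution p X S I A ->
  V (X 0 - e1) (S 0 - e2) (I 0 - e3) (A 0 - e4) < m -> forall t, 0 <= t ->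
  V (X t - e1) (S t - e2) (I t - e3) (A t - e4)
  <= V (X 0 - e1) (S 0 - e2) (I 0 - e3) (A 0 - e4) * exp (- kap * t).

Let dev (X S I A : R -> R) t := sqnorm4 (X t - e1) (S t - e2) (I t - e3) (A t - e4).

Lemma lam_le_Lam : lam <= Lam.
Proof.
  destruct (V_bounds 1 0 0 0) as [Hlo Hhi].
  unfold sqnorm4 in *; simpl in *; lra.
Qed.

Lemma dev_exp_bound X S I A : is_solution p X S I A -> Lam * dev X S I A 0 < m ->
  forall t, 0 <= t -> lam * dev X S I A t <= Lam * dev X S I A 0 * exp (- kap * t).
Proof.
  intros Hsol Hm t Ht; unfold dev.
  destruct (V_bounds (X t - e1) (S t - e2) (I t - e3) (A t - e4)) as [Hlo _].
  destruct (V_bounds (X 0 - e1) (S 0 - e2) (I 0 - e3) (A 0 - e4)) as [_ Hhi].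
  pose proof (V_decay X S I A Hsol ltac:(unfold dev in Hm; lra) t Ht).
  pose proof (exp_pos (- kap * t)).
  assert (V (X 0 - e1) (S 0 - e2) (I 0 - e3) (A 0 - e4) * exp (- kap * t) <=
          Lam * sqnorm4 (X 0 - e1) (S 0 - e2) (I 0 - e3) (A 0 - e4) * exp (- kap * t))
    by (apply Rmult_le_compat_r; lra).
  lra.
Qed.

Let del0 := sqrt (m / Lam).

Lemma del0_pos : 0 < del0.
Proof. pose proof lam_le_Lam; apply sqrt_lt_R0, Rdiv_lt_0_compat; lra. Qed.

Lemma dev0_small X S I A :
  dist4 (X 0) (S 0) (I 0) (A 0) e1 e2 e3 e4 < del0 -> Lam * dev X S I A 0 < m.
Proof.
  pose proof lam_le_Lam; pose proof del0_pos.
  intros Hdist; apply dist4_lt_iff in Hdist; [|lra].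
  unfold del0 in Hdist; rewrite pow2_sqrt in Hdist by (apply Rlt_le, Rdiv_lt_0_compat; lra).
  unfold dev; apply (Rmult_lt_compat_l Lam) in Hdist; [|lra].
  replace (Lam * (m / Lam)) with m in Hdist by (field; lra); exact Hdist.
Qed.

Lemma lyapunov_stable : forall eps, 0 < eps -> exists del, 0 < del /\
  forall X S I A, is_solution p X S I A ->
    dist4 (X 0) (S 0) (I 0) (A 0) e1 e2 e3 e4 < del ->
    forall t, 0 <= t -> dist4 (X t) (S t) (I t) (A t) e1 e2 e3 e4 < eps.
Proof.
  intros eps Heps; pose proof lam_le_Lam; pose proof del0_pos.
  set (del1 := eps * sqrt (lam / Lam)).
  assert (Hdel1 : 0 < del1) by (apply Rmult_lt_0_compat, sqrt_lt_R0, Rdiv_lt_0_compat; lra).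
  exists (Rmin del0 del1); split; [apply Rmin_glb_lt; assumption|].
  intros X S I A Hsol Hdist t Ht.
  pose proof (Rmin_l del0 del1); pose proof (Rmin_r del0 del1).
  pose proof (dev_exp_bound X S I A Hsol (dev0_small X S I A ltac:(lra)) t Ht) as Hbound.
  assert (Hdev0 : dev X S I A 0 < del1^2).
  { apply dist4_lt_iff in Hdist; [|apply Rmin_glb_lt; lra].
    pose proof (Rmin_glb_lt _ _ _ del0_pos Hdel1).
    pose proof (pow_incr (Rmin del0 del1) del1 2 ltac:(lra)).
    unfold dev; lra. }
  assert (Hdel1sq : Lam * del1^2 = lam * eps^2).
  { unfold del1; rewrite Rpow_mult_distr, pow2_sqrt by (apply Rlt_le, Rdiv_lt_0_compat; lra).
    field; lra. }
  apply dist4_lt_iff; [exact Heps|].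
  pose proof (exp_neg_mul_le_1 kap t ltac:(lra) Ht).
  pose proof (sqnorm4_nonneg (X 0 - e1) (S 0 - e2) (I 0 - e3) (A 0 - e4)).
  assert (Lam * dev X S I A 0 * exp (- kap * t) <= Lam * dev X S I A 0).
  { assert (0 <= Lam * dev X S I A 0) by (apply Rmult_le_pos; unfold dev; lra).
    rewrite <- (Rmult_1_r (Lam * dev X S I A 0)) at 2; apply Rmult_le_compat_l; lra. }
  assert (Lam * dev X S I A 0 < Lam * del1^2) by (apply Rmult_lt_compat_l; lra).
  apply (Rmult_lt_reg_l lam); [exact lam_pos|]; unfold dev in *; lra.
Qed.

Lemma lyapunov_attractive : exists del, 0 < del /\
  forall X S I A, is_solution p X S I A ->
    dist4 (X 0) (S 0) (I 0) (A 0) e1 e2 e3 e4 < del ->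
    is_lim X p_infty e1 /\ is_lim S p_infty e2 /\
    is_lim I p_infty e3 /\ is_lim A p_infty e4.
Proof.
  exists del0; split; [exact del0_pos|]; intros X S I A Hsol Hdist.
  pose proof (dev_exp_bound X S I A Hsol (dev0_small X S I A Hdist)) as Hbound.
  set (C := Lam * dev X S I A 0 / lam).
  assert (HC : forall t, 0 <= t -> dev X S I A t <= C * exp (- kap * t)).
  { intros t Ht; specialize (Hbound t Ht); unfold C.
    apply (Rmult_le_reg_l lam); [exact lam_pos|].
    replace (lam * (Lam * dev X S I A 0 / lam * exp (- kap * t)))
      with (Lam * dev X S I A 0 * exp (- kap * t)) by (field; lra).
    exact Hbound. }
  repeat split; apply (is_lim_of_sq_le_exp _ _ C kap kap_pos); intros t Ht;
    specialize (HC t Ht); unfold dev in HC;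
    destruct (sqnorm4_ge (X t - e1) (S t - e2) (I t - e3) (A t - e4)) as [? [? [? ?]]];
    lra.
Qed.

Lemma loc_asymp_stable_of_lyapunov : loc_asymp_stable p e1 e2 e3 e4.
Proof. split; [exact lyapunov_stable|exact lyapunov_attractive]. Qed.

End LyapunovStability.

(** * A Lyapunov function for the error system *)

Lemma young_le (P u v a c : R) :
  0 < a -> Rabs P <= c -> P * u * v <= a / 4 * u^2 + c^2 / a * v^2.
Proof.
  intros Ha Hc.
  assert (Hprod : P * u * v <= c * Rabs u * Rabs v).
  { apply Rle_trans with (Rabs (P * u * v)); [apply Rle_abs|].
    rewrite !Rabs_mult; pose proof (Rabs_pos u); pose proof (Rabs_pos v).
    apply Rmult_le_compat_r; [assumption|]; apply Rmult_le_compat_r; assumption. }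
  assert (Eu : Rabs u ^ 2 = u ^ 2) by (unfold Rabs; destruct Rcase_abs; ring).
  assert (Ev : Rabs v ^ 2 = v ^ 2) by (unfold Rabs; destruct Rcase_abs; ring).
  enough (c * Rabs u * Rabs v <= a / 4 * u^2 + c^2 / a * v^2) by lra.
  apply Rmult_le_reg_l with a; [lra|].
  replace (a * (a / 4 * u^2 + c^2 / a * v^2)) with (a^2 / 4 * u^2 + c^2 * v^2) by (field; lra).
  rewrite <- Eu, <- Ev; pose proof (pow2_ge_0 (a * Rabs u / 2 - c * Rabs v)); nra.
Qed.

(* Each off-diagonal term is absorbed by Young's inequality into half of a
   diagonal term, [i] and [s] paying for the terms coupling them to earlier variables. *)
Lemma quadratic_form_le x i s y Pxx Pxi Pii Pxs Pis Pss Pyy Pys Pyi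
    ax ai as_ ay cxi cxs cis cys cyi :
  0 < ax -> 0 < ai -> 0 < as_ -> 0 < ay ->
  Pxx <= -ax -> Pii <= -ai -> Pss <= -as_ -> Pyy <= -ay ->
  Rabs Pxi <= cxi -> Rabs Pxs <= cxs -> Rabs Pis <= cis -> Rabs Pys <= cys ->
  Rabs Pyi <= cyi ->
  cxi^2 / ax + cyi^2 / ay <= ai / 2 -> cxs^2 / ax + cis^2 / ai + cys^2 / ay <= as_ / 2 ->
  Pxx*x^2 + Pxi*x*i + Pii*i^2 + Pxs*x*s + Pis*i*s + Pss*s^2 + Pyy*y^2 + Pys*y*s + Pyi*y*i
  <= -(ax/2)*x^2 - (ai/4)*i^2 - (as_/2)*s^2 - (ay/2)*y^2.
Proof.
  intros Hax Hai Has Hay Hxx Hii Hss Hyy Hxi Hxs His Hys Hyi Hi Hs.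
  pose proof (young_le Pxi x i ax cxi Hax Hxi).
  pose proof (young_le Pxs x s ax cxs Hax Hxs).
  pose proof (young_le Pis i s ai cis Hai His).
  pose proof (young_le Pys y s ay cys Hay Hys).
  pose proof (young_le Pyi y i ay cyi Hay Hyi).
  pose proof (pow2_ge_0 x); pose proof (pow2_ge_0 i);
  pose proof (pow2_ge_0 s); pose proof (pow2_ge_0 y).
  assert (Pxx*x^2 <= -ax*x^2) by (apply Rmult_le_compat_r; lra).
  assert (Pii*i^2 <= -ai*i^2) by (apply Rmult_le_compat_r; lra).
  assert (Pss*s^2 <= -as_*s^2) by (apply Rmult_le_compat_r; lra).
  assert (Pyy*y^2 <= -ay*y^2) by (apply Rmult_le_compat_r; lra).
  assert ((cxi^2/ax + cyi^2/ay)*i^2 <= ai/2*i^2) by (apply Rmult_le_compat_r; lra).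
  assert ((cxs^2/ax + cis^2/ai + cys^2/ay)*s^2 <= as_/2*s^2)
    by (apply Rmult_le_compat_r; lra).
  nra.
Qed.

Ltac pos := match goal with
 | |- 0 < _ * _ => apply Rmult_lt_0_compat; pos
 | |- 0 < _ / _ => apply Rdiv_lt_0_compat; pos
 | |- 0 < _ + _ => apply Rplus_lt_0_compat; pos
 | |- 0 < _ ^ _ => apply pow_lt; pos
 | _ => try lra
 end.

Lemma Rmin4_le a b c d :
  Rmin (Rmin a b) (Rmin c d) <= a /\ Rmin (Rmin a b) (Rmin c d) <= b /\
  Rmin (Rmin a b) (Rmin c d) <= c /\ Rmin (Rmin a b) (Rmin c d) <= d.
Proof.
  pose proof (Rmin_l (Rmin a b) (Rmin c d)); pose proof (Rmin_r (Rmin a b) (Rmin c d));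
  pose proof (Rmin_l a b); pose proof (Rmin_r a b); pose proof (Rmin_l c d);
  pose proof (Rmin_r c d); lra.
Qed.

Lemma Rmin4_pos a b c d : 0 < a -> 0 < b -> 0 < c -> 0 < d -> 0 < Rmin (Rmin a b) (Rmin c d).
Proof. intros; repeat apply Rmin_glb_lt; assumption. Qed.

Section ErrorLyapunov.

Variables (al0 b0 e0 be sg et Gm Lm : R).
Hypotheses (al0_pos : 0 < al0) (b0_pos : 0 < b0) (e0_pos : 0 < e0) (be_pos : 0 < be)
  (sg_pos : 0 < sg) (et_pos : 0 < et) (Gm_pos : 0 < Gm) (Lm_pos : 0 < Lm).

(* The weights are tuned so that [lyapV_deriv_le] closes: [w_xi] small against
   [al0] and [e0 * b0], [tol_xi] small against [w_xi], [w_y] balancing the y-i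
   coupling and [w_s] absorbing every coupling with s. *)
Definition w_xi := Rmin (Rmin (al0 / 8) (e0 * b0 / (144 * al0))) (Rmin (e0 / 2) (b0 / 2)).
Definition tol_xi := Rmin 1 (w_xi * b0 * e0 * al0 / 128).
Definition w_y := w_xi * b0 * et / (16 * sg^2).
Definition w_s := 2 * ((2 * e0 * Gm + 2 * w_xi * Lm)^2 / (e0 * al0 / 2)
  + (2 * b0 * Lm + 2 * w_xi * Gm)^2 / (w_xi * b0) + w_xi * b0 / 8) / be.

Lemma w_xi_pos : 0 < w_xi.
Proof. unfold w_xi; apply Rmin4_pos; pos. Qed.

Lemma w_xi_le : w_xi <= al0 / 8 /\ w_xi * 144 * al0 <= e0 * b0 /\
  w_xi <= e0 / 2 /\ w_xi <= b0 / 2.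
Proof.
  unfold w_xi; destruct (Rmin4_le (al0 / 8) (e0 * b0 / (144 * al0)) (e0 / 2) (b0 / 2))
    as [H1 [H2 [H3 H4]]].
  repeat split; try assumption.
  apply (Rmult_le_compat_r (144 * al0)) in H2; [|lra].
  replace (e0 * b0 / (144 * al0) * (144 * al0)) with (e0 * b0) in H2 by (field; lra); lra.
Qed.

Lemma tol_xi_pos : 0 < tol_xi.
Proof. pose proof w_xi_pos; unfold tol_xi; apply Rmin_glb_lt; pos. Qed.

Lemma tol_xi_le : tol_xi <= 1 /\ 128 * tol_xi <= w_xi * b0 * e0 * al0.
Proof.
  unfold tol_xi; pose proof (Rmin_l 1 (w_xi * b0 * e0 * al0 / 128));
  pose proof (Rmin_r 1 (w_xi * b0 * e0 * al0 / 128)); lra.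
Qed.

Lemma w_y_pos : 0 < w_y.
Proof. pose proof w_xi_pos; unfold w_y; pos. Qed.

Lemma w_y_eq : w_y * 16 * sg^2 = w_xi * b0 * et.
Proof. unfold w_y; field; lra. Qed.

Lemma w_s_pos : 0 < w_s.
Proof.
  pose proof w_xi_pos; unfold w_s.
  apply Rdiv_lt_0_compat; [|lra]; apply Rmult_lt_0_compat; [lra|].
  apply Rplus_le_lt_0_compat; [apply Rplus_le_le_0_compat|pos];
  apply Rmult_le_pos; try apply pow2_ge_0; left; apply Rinv_0_lt_compat; pos.
Qed.

Lemma w_s_eq : (2 * e0 * Gm + 2 * w_xi * Lm)^2 / (e0 * al0 / 2)
  + (2 * b0 * Lm + 2 * w_xi * Gm)^2 / (w_xi * b0) + w_xi * b0 / 8 = w_s * be / 2.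
Proof. pose proof w_xi_pos; unfold w_s; field; lra. Qed.

(* [e0] and [b0] cancel the x-i coupling at the equilibrium; the small cross term
   [w_xi * x * i] turns the damping of x into damping of i. *)
Definition lyapV (x s i y : R) : R :=
  e0 * x^2 + b0 * i^2 + 2 * w_xi * x * i + w_s * s^2 + w_y * y^2.

Definition lyapV_deriv (x s i y dx ds di dy : R) : R :=
  2 * e0 * x * dx + 2 * b0 * i * di + 2 * w_xi * (dx * i + x * di)
  + 2 * w_s * s * ds + 2 * w_y * y * dy.

Lemma is_derive_lyapV (x s i y : R -> R) t dx ds di dy :
  is_derive x t dx -> is_derive s t ds -> is_derive i t di -> is_derive y t dy ->
  is_derive (fun t => lyapV (x t) (s t) (i t) (y t)) t
    (lyapV_deriv (x t) (s t) (i t) (y t) dx ds di dy).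
Proof.
  intros Hx Hs Hi Hy; unfold lyapV, lyapV_deriv.
  auto_derive; [repeat split; eexists; eassumption|].
  replace (Derive (fun u => x u) t) with dx by (symmetry; apply is_derive_unique, Hx).
  replace (Derive (fun u => s u) t) with ds by (symmetry; apply is_derive_unique, Hs).
  replace (Derive (fun u => i u) t) with di by (symmetry; apply is_derive_unique, Hi).
  replace (Derive (fun u => y u) t) with dy by (symmetry; apply is_derive_unique, Hy).
  ring.
Qed.

Definition lyap_lo := Rmin (Rmin (e0 / 2) (b0 / 2)) (Rmin w_s w_y).
Definition lyap_hi := 3 * e0 / 2 + 3 * b0 / 2 + w_s + w_y.

Lemma lyap_lo_pos : 0 < lyap_lo.
Proof. pose proof w_s_pos; pose proof w_y_pos; unfold lyap_lo; apply Rmin4_pos; lra. Qed.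

Lemma lyapV_bounds x s i y :
  lyap_lo * sqnorm4 x s i y <= lyapV x s i y <= lyap_hi * sqnorm4 x s i y.
Proof.
  pose proof w_xi_pos; pose proof w_xi_le as [_ [_ [Hxe Hxb]]]; pose proof w_s_pos;
  pose proof w_y_pos.
  destruct (Rmin4_le (e0 / 2) (b0 / 2) w_s w_y) as [Hlo1 [Hlo2 [Hlo3 Hlo4]]].
  fold lyap_lo in Hlo1, Hlo2, Hlo3, Hlo4.
  assert (Hxi : 2 * Rabs (x * i) <= x^2 + i^2).
  { rewrite Rabs_mult; pose proof (pow2_ge_0 (Rabs x - Rabs i)).
    assert (Rabs x ^ 2 = x ^ 2) by (unfold Rabs; destruct Rcase_abs; ring).
    assert (Rabs i ^ 2 = i ^ 2) by (unfold Rabs; destruct Rcase_abs; ring). nra. }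
  pose proof (Rle_abs (x * i)); pose proof (Rle_abs (- (x * i))); rewrite Rabs_Ropp in *.
  pose proof (pow2_ge_0 x); pose proof (pow2_ge_0 i); pose proof (pow2_ge_0 s);
  pose proof (pow2_ge_0 y).
  unfold lyapV, sqnorm4, lyap_hi; split; nra.
Qed.

(* The error system x' = a x - b i - g s, s' = h s, i' = e x + l s,
   y' = sg (s + i) - et y has state-dependent coefficients; near the equilibrium,
   where a = - al0, b = b0, e = e0 and h = - be, they satisfy these bounds. *)
Definition coeffs_ok (a b g e l h : R) : Prop :=
  -3 * al0 / 2 <= a <= -al0 / 2 /\ b0 / 2 <= b /\ Rabs (b0 * e - e0 * b) <= tol_xi /\
  e <= 2 * e0 /\ 0 <= g <= Gm /\ 0 <= l <= Lm /\ h <= -be / 2.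

Definition decay_const :=
  Rmin (Rmin (e0 * al0 / 4) (w_xi * b0 / 4)) (Rmin (w_s * be / 2) (w_y * et)).

Lemma diagonal_le_decay_const x s i y :
  -(e0 * al0 / 4) * x^2 - (w_xi * b0 / 4) * i^2 - (w_s * be / 2) * s^2 - (w_y * et) * y^2
  <= - decay_const * sqnorm4 x s i y.
Proof.
  destruct (Rmin4_le (e0 * al0 / 4) (w_xi * b0 / 4) (w_s * be / 2) (w_y * et))
    as [H1 [H2 [H3 H4]]]; fold decay_const in H1, H2, H3, H4; unfold sqnorm4.
  pose proof (pow2_ge_0 x); pose proof (pow2_ge_0 i);
  pose proof (pow2_ge_0 s); pose proof (pow2_ge_0 y).
  assert (decay_const * x^2 <= e0 * al0 / 4 * x^2) by (apply Rmult_le_compat_r; lra).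
  assert (decay_const * i^2 <= w_xi * b0 / 4 * i^2) by (apply Rmult_le_compat_r; lra).
  assert (decay_const * s^2 <= w_s * be / 2 * s^2) by (apply Rmult_le_compat_r; lra).
  assert (decay_const * y^2 <= w_y * et * y^2) by (apply Rmult_le_compat_r; lra).
  lra.
Qed.

Lemma lyapV_deriv_le a b g e l h x s i y : coeffs_ok a b g e l h ->
  lyapV_deriv x s i y (a * x - b * i - g * s) (h * s) (e * x + l * s)
    (sg * s + sg * i - et * y)
  <= - decay_const * sqnorm4 x s i y.
Proof.
  intros [[Ha1 Ha2] [Hb [He1 [He2 [[Hg1 Hg2] [[Hl1 Hl2] Hh]]]]]].
  eapply Rle_trans; [|apply diagonal_le_decay_const].
  pose proof w_xi_pos as Hw; pose proof w_xi_le as [Hw1 [Hw2 _]];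
  pose proof tol_xi_pos as Ht; pose proof tol_xi_le as [Ht1 Ht2];
  pose proof w_y_pos as Hmu; pose proof w_y_eq as Hmu1; pose proof w_s_pos as Hk;
  pose proof w_s_eq as Hwk.
  set (eps := w_xi) in *; set (tau := tol_xi) in *; set (mu := w_y) in *;
  set (k := w_s) in *.
  assert (Hyy : (2*mu*sg)^2 / (2*mu*et) = eps*b0/8).
  { replace ((2*mu*sg)^2) with (4*mu*(mu*sg^2)) by ring.
    replace (mu*sg^2) with (eps*b0*et/16) by lra.
    field; lra. }
  replace (lyapV_deriv x s i y (a * x - b * i - g * s) (h * s) (e * x + l * s)
             (sg * s + sg * i - et * y))
    with ((2*e0*a + 2*eps*e)*x^2 + (2*(b0*e - e0*b) + 2*eps*a)*x*i + (-2*eps*b)*i^2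
      + (-2*e0*g + 2*eps*l)*x*s + (2*b0*l - 2*eps*g)*i*s + (2*k*h)*s^2
      + (-2*mu*et)*y^2 + (2*mu*sg)*y*s + (2*mu*sg)*y*i)
    by (unfold lyapV_deriv; fold eps k mu; ring).
  replace (-(e0*al0/4)*x^2 - (eps*b0/4)*i^2 - (k*be/2)*s^2 - (mu*et)*y^2)
    with (-(e0*al0/2/2)*x^2 - (eps*b0/4)*i^2 - (k*be/2)*s^2 - (2*mu*et/2)*y^2) by field.
  apply (quadratic_form_le x i s y _ _ _ _ _ _ _ _ _ (e0*al0/2) (eps*b0) (k*be) (2*mu*et)
    (2*tau + 3*eps*al0) (2*e0*Gm + 2*eps*Lm) (2*b0*Lm + 2*eps*Gm) (2*mu*sg) (2*mu*sg));
    try (apply Rabs_le; split); try nra.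
  - pose proof (Rle_abs (- (b0 * e - e0 * b))); rewrite Rabs_Ropp in *.
    assert (0 <= eps * (a + 3 * al0 / 2)) by (apply Rmult_le_pos; lra); lra.
  - pose proof (Rle_abs (b0 * e - e0 * b)).
    assert (0 <= eps * (- al0 / 2 - a)) by (apply Rmult_le_pos; lra); nra.
  - rewrite Hyy.
    assert ((2*tau + 3*eps*al0)^2 <= 8*tau^2 + 18*eps^2*al0^2)
      by (pose proof (pow2_ge_0 (2*tau - 3*eps*al0)); nra).
    assert (8*tau^2 + 18*eps^2*al0^2 <= 3*eps*b0/8 * (e0*al0/2)).
    { assert (tau^2 <= tau) by nra.
      assert (eps*al0/8*(eps*144*al0) <= eps*al0/8*(e0*b0))
        by (apply Rmult_le_compat_l; nra).
      nra. }
    enough ((2*tau + 3*eps*al0)^2 / (e0*al0/2) <= 3*eps*b0/8) by lra.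
    apply (Rmult_le_reg_r (e0*al0/2)); [nra|].
    unfold Rdiv at 1; rewrite Rmult_assoc, Rinv_l; nra.
Qed.

Definition decay_rate := decay_const / lyap_hi.

Lemma decay_rate_pos : 0 < decay_rate.
Proof.
  pose proof w_xi_pos; pose proof w_s_pos; pose proof w_y_pos.
  unfold decay_rate, decay_const, lyap_hi; apply Rdiv_lt_0_compat; [apply Rmin4_pos|]; pos.
Qed.

Lemma lyapV_deriv_le_rate a b g e l h x s i y : coeffs_ok a b g e l h ->
  lyapV_deriv x s i y (a * x - b * i - g * s) (h * s) (e * x + l * s)
    (sg * s + sg * i - et * y)
  <= - decay_rate * lyapV x s i y.
Proof.
  intros Hok; eapply Rle_trans; [exact (lyapV_deriv_le _ _ _ _ _ _ _ _ _ _ Hok)|].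
  pose proof decay_rate_pos; pose proof (lyapV_bounds x s i y) as [_ Hhi].
  assert (Hhi_pos : 0 < lyap_hi)
    by (pose proof w_s_pos; pose proof w_y_pos; unfold lyap_hi; pos).
  replace (- decay_const * sqnorm4 x s i y) with (- decay_rate * (lyap_hi * sqnorm4 x s i y))
    by (unfold decay_rate; field; lra).
  apply Ropp_le_contravar in Hhi; nra.
Qed.

End ErrorLyapunov.

(** * The model near E2 *)

Ltac ex_derive_rational := auto_derive; repeat split; apply Rgt_not_eq; unfold Rgt; pos.

Section Model.

Variable p : params.
Local Notation r := (p_r p). Local Notation K := (p_K p).
Local Notation al := (p_alpha p). Local Notation ph := (p_phi p).
Local Notation c := (p_c p). Local Notation m1 := (p_m1 p). Local Notation m2 := (p_m2 p).
Local Notation la := (p_lambda p). Local Notation a := (p_a p). Local Notation d := (p_d p).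
Local Notation de := (p_delta p). Local Notation ga := (p_gamma p).
Local Notation sg := (p_sigma p). Local Notation et := (p_eta p).
Local Notation Xb := (Xbar p). Local Notation Ib := (Ibar p). Local Notation Ab := (Abar p).

Hypotheses (r_pos : 0 < r) (K_pos : 0 < K) (al_pos : 0 < al) (ph_pos : 0 < ph)
  (c_pos : 0 < c) (m1_pos : 0 < m1) (m2_pos : 0 < m2) (la_pos : 0 < la) (a_pos : 0 < a)
  (d_pos : 0 < d) (de_pos : 0 < de) (ga_pos : 0 < ga) (sg_pos : 0 < sg) (et_pos : 0 < et).
Hypothesis E2_exists : d + de < m2 * ph * al * K / (c + K).
Hypothesis stab_lower :
  m1 * (d + de) * (a + Ab) / ((a + Ab) * (la + d) - la * a) < m2 * ph.
Hypothesis stab_upper : m2 * ph < (K + c) * (d + de) / (al * (K - c)).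

Lemma E2_exists_mul : (d + de) * (c + K) < m2 * ph * al * K.
Proof.
  apply (Rmult_lt_compat_r (c + K)) in E2_exists; [|lra].
  replace (m2 * ph * al * K / (c + K) * (c + K)) with (m2 * ph * al * K) in E2_exists
    by (field; lra); exact E2_exists.
Qed.

Lemma death_lt_growth : d + de < m2 * ph * al.
Proof. pose proof E2_exists_mul; nra. Qed.

Lemma Xbar_mul_eq : Xb * (m2 * ph * al - (d + de)) = c * (d + de).
Proof. pose proof death_lt_growth; unfold Xbar; field; lra. Qed.

Lemma Xbar_pos : 0 < Xb.
Proof. pose proof death_lt_growth; unfold Xbar; pos. Qed.

Lemma Xbar_lt_K : Xb < K.
Proof. pose proof E2_exists_mul; pose proof death_lt_growth; pose proof Xbar_mul_eq; nra. Qed.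

Lemma c_lt_K : c < K.
Proof.
  destruct (Rlt_or_le c K) as [Hlt|Hge]; [exact Hlt|exfalso].
  destruct (Req_dec K c) as [HKc|HKc].
  - rewrite HKc, Rminus_diag, Rmult_0_r, Rdiv_0_r in stab_upper; nra.
  - assert ((K + c) * (d + de) / (al * (K - c)) < 0).
    { unfold Rdiv; apply Rmult_pos_neg; [nra|]; apply Rinv_lt_0_compat; nra. }
    nra.
Qed.

Lemma K_sub_c_lt_2Xbar : K - c < 2 * Xb.
Proof.
  pose proof c_lt_K; pose proof death_lt_growth; pose proof Xbar_mul_eq.
  apply (Rmult_lt_compat_r (al * (K - c))) in stab_upper; [|nra].
  replace ((K + c) * (d + de) / (al * (K - c)) * (al * (K - c))) with ((K + c) * (d + de))
    in stab_upper by (field; split; lra).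
  apply (Rmult_lt_reg_r (m2 * ph * al - (d + de))); nra.
Qed.

Lemma Ibar_pos : 0 < Ib.
Proof. pose proof Xbar_pos; pose proof Xbar_lt_K; unfold Ibar; pos. Qed.

Lemma Abar_pos : 0 < Ab.
Proof. pose proof Ibar_pos; unfold Abar; apply Rdiv_lt_0_compat; nra. Qed.

Lemma prey_equilibrium : r * (1 - Xb / K) = ph * al * Ib / (c + Xb).
Proof. pose proof Xbar_pos; unfold Ibar; field; lra. Qed.

Lemma infected_equilibrium : m2 * ph * al * Xb / (c + Xb) = d + de.
Proof.
  pose proof Xbar_pos; pose proof Xbar_mul_eq.
  apply (Rmult_eq_reg_r (c + Xb)); [|lra].
  replace (m2 * ph * al * Xb / (c + Xb) * (c + Xb)) with (m2 * ph * al * Xb) by (field; lra).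
  lra.
Qed.

Lemma toxicant_equilibrium : ga + sg * Ib = et * Ab.
Proof. unfold Abar; field; lra. Qed.

Definition coef_a (X : R) := X * (- r / K + ph * al * Ib / ((c + X) * (c + Xb))).
Definition coef_b (X : R) := ph * al * X / (c + X).
Definition coef_g (X : R) := al * X / (c + X).
Definition coef_q (X : R) := m2 * ph * al * c / ((c + X) * (c + Xb)).
Definition coef_l (A : R) := la * A / (a + A).
Definition coef_h1 (X : R) := m1 * al * X / (c + X).

Lemma fX_error X S I A : 0 < X ->
  fX p X S I A = coef_a X * (X - Xb) - coef_b X * (I - Ib) - coef_g X * S.
Proof.
  intros HX; pose proof Xbar_pos; pose proof prey_equilibrium.
  unfold fX, coef_a, coef_b, coef_g.
  replace (r * X * (1 - X / K)) with (X * (r * (1 - Xb / K)) - r * X * (X - Xb) / K)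
    by (field; lra).
  rewrite H0; field; lra.
Qed.

Lemma fS_error X S I A : fS p X S I A = (coef_h1 X - coef_l A - d) * S.
Proof. unfold fS, coef_h1, coef_l, Rdiv; ring. Qed.

Lemma fI_error X S I A : 0 < X ->
  fI p X S I A = I * coef_q X * (X - Xb) + coef_l A * S.
Proof.
  intros HX; pose proof Xbar_pos; pose proof infected_equilibrium.
  unfold fI, coef_q, coef_l; rewrite <- H0.
  replace (la * A * S / (a + A)) with (la * A / (a + A) * S) by (unfold Rdiv; ring).
  set (l := la * A / (a + A)); field; split; lra.
Qed.

Lemma fA_error X S I A : fA p X S I A = sg * S + sg * (I - Ib) - et * (A - Ab).
Proof. pose proof toxicant_equilibrium; unfold fA; lra. Qed.

Local Notation al0 := (- coef_a Xb).
Local Notation b0 := (coef_b Xb).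
Local Notation e0 := (Ib * coef_q Xb).
Local Notation be := (- (coef_h1 Xb - coef_l Ab - d)).

Lemma coef_a_Xbar_neg : coef_a Xb < 0.
Proof.
  pose proof Xbar_pos; pose proof K_sub_c_lt_2Xbar; pose proof prey_equilibrium.
  unfold coef_a.
  replace (ph * al * Ib / ((c + Xb) * (c + Xb))) with (r * (K - Xb) / (K * (c + Xb))).
  - replace (- r / K + r * (K - Xb) / (K * (c + Xb)))
      with (r * (K - c - 2 * Xb) / (K * (c + Xb)))
      by (field; lra).
    apply Rmult_pos_neg; [lra|]; unfold Rdiv; apply Rmult_neg_pos; [nra|].
    apply Rinv_0_lt_compat; nra.
  - replace (ph * al * Ib / ((c + Xb) * (c + Xb))) with (ph * al * Ib / (c + Xb) / (c + Xb))
      by (field; lra).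
    rewrite <- H1; field; lra.
Qed.

Lemma coef_h_Xbar_neg : coef_h1 Xb - coef_l Ab - d < 0.
Proof.
  pose proof Xbar_pos; pose proof Abar_pos; pose proof infected_equilibrium.
  unfold coef_h1, coef_l.
  assert (Hden : 0 < (a + Ab) * (la + d) - la * a).
  { replace ((a + Ab) * (la + d) - la * a) with (a * d + Ab * la + Ab * d) by ring; pos. }
  apply (Rmult_lt_compat_r ((a + Ab) * (la + d) - la * a)) in stab_lower; [|lra].
  replace (m1 * (d + de) * (a + Ab) / ((a + Ab) * (la + d) - la * a)
           * ((a + Ab) * (la + d) - la * a)) with (m1 * (d + de) * (a + Ab)) in stab_lower
    by (field; lra).
  replace (m1 * al * Xb / (c + Xb)) with (m1 * (d + de) / (m2 * ph))
    by (rewrite <- H1; field; repeat split; lra).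
  assert (m1 * (d + de) < m2 * ph * (la * Ab / (a + Ab) + d)).
  { apply (Rmult_lt_reg_r (a + Ab)); [lra|].
    replace (m2 * ph * (la * Ab / (a + Ab) + d) * (a + Ab))
      with (m2 * ph * ((a + Ab) * (la + d) - la * a)) by (field; lra).
    nra. }
  enough (m1 * (d + de) / (m2 * ph) < la * Ab / (a + Ab) + d) by lra.
  apply (Rmult_lt_reg_r (m2 * ph)); [nra|].
  replace (m1 * (d + de) / (m2 * ph) * (m2 * ph)) with (m1 * (d + de)) by (field; lra); nra.
Qed.

Lemma b0_pos : 0 < b0.
Proof. pose proof Xbar_pos; unfold coef_b; pos. Qed.

Lemma e0_pos : 0 < e0.
Proof. pose proof Xbar_pos; pose proof Ibar_pos; unfold coef_q; pos. Qed.

Lemma coef_g_bounds X : 0 < X -> 0 <= coef_g X <= al.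
Proof.
  intros HX; unfold coef_g; split; [left; pos|].
  apply (Rmult_le_reg_r (c + X)); [lra|].
  replace (al * X / (c + X) * (c + X)) with (al * X) by (field; lra); nra.
Qed.

Lemma coef_l_bounds A : 0 < A -> 0 <= coef_l A <= la.
Proof.
  intros HA; unfold coef_l; split; [left; pos|].
  apply (Rmult_le_reg_r (a + A)); [lra|].
  replace (la * A / (a + A) * (a + A)) with (la * A) by (field; lra); nra.
Qed.


Lemma coefficients_near eta : 0 < eta -> exists rho, 0 < rho /\ forall X I A,
  Rabs (X - Xb) < rho -> Rabs (I - Ib) < rho -> Rabs (A - Ab) < rho ->
  0 < X /\ 0 < A /\ Rabs (coef_a X - coef_a Xb) < eta /\ Rabs (coef_b X - b0) < eta /\
  Rabs (I * coef_q X - e0) < eta /\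
  Rabs ((coef_h1 X - coef_l A - d) - (coef_h1 Xb - coef_l Ab - d)) < eta.
Proof.
  intros Heta; pose proof Xbar_pos; pose proof Abar_pos; pose proof Ibar_pos.
  set (eta_q := Rmin 1 (eta / (2 * (Rabs Ib + 1)))).
  assert (Heta_q : 0 < eta_q)
    by (pose proof (Rabs_pos Ib); apply Rmin_glb_lt; [lra|apply Rdiv_lt_0_compat; lra]).
  assert (HnearX : locally Xb (fun X => 0 < X /\ Rabs (coef_a X - coef_a Xb) < eta /\
    Rabs (coef_b X - b0) < eta /\ Rabs (coef_q X - coef_q Xb) < eta_q /\
    Rabs (coef_h1 X - coef_h1 Xb) < eta / 2)).
  { repeat apply filter_and; [apply locally_pos; lra| | | |];
      apply ex_derive_locally_near; try pos;
      [unfold coef_a|unfold coef_b|unfold coef_q|unfold coef_h1]; ex_derive_rational. }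
  assert (HnearA : locally Ab (fun A => 0 < A /\ Rabs (coef_l A - coef_l Ab) < eta / 2)).
  { apply filter_and; [apply locally_pos; lra|].
    apply ex_derive_locally_near; [unfold coef_l; ex_derive_rational|pos]. }
  destruct HnearX as [rhoX HrhoX]; destruct HnearA as [rhoA HrhoA].
  set (rhoI := eta / (2 * (Rabs (coef_q Xb) + 1))).
  assert (HrhoI : 0 < rhoI)
    by (pose proof (Rabs_pos (coef_q Xb)); apply Rdiv_lt_0_compat; lra).
  exists (Rmin (Rmin rhoX rhoA) rhoI).
  split; [apply Rmin_glb_lt; [apply Rmin_glb_lt; apply cond_pos|exact HrhoI]|].
  intros X I A HX HI HA.
  pose proof (Rmin_l (Rmin rhoX rhoA) rhoI); pose proof (Rmin_r (Rmin rhoX rhoA) rhoI);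
  pose proof (Rmin_l rhoX rhoA); pose proof (Rmin_r rhoX rhoA).
  destruct (HrhoX X ltac:(change (Rabs (X - Xb) < rhoX); lra))
    as [HXpos [Ha [Hb [Hqnear Hh1]]]].
  destruct (HrhoA A ltac:(change (Rabs (A - Ab) < rhoA); lra)) as [HApos Hl].
  do 4 (split; [assumption|]).
  split.
  - apply Rabs_mult_sub_lt; [exact Heta|fold rhoI; lra|exact Hqnear].
  - replace (coef_h1 X - coef_l A - d - (coef_h1 Xb - coef_l Ab - d))
      with ((coef_h1 X - coef_h1 Xb) - (coef_l A - coef_l Ab)) by ring.
    unfold Rminus at 1; eapply Rle_lt_trans; [apply Rabs_triang|]; rewrite Rabs_Ropp; lra.
Qed.

Local Notation tol := (tol_xi al0 b0 e0).
Local Notation V := (lyapV al0 b0 e0 be sg et al la).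
Local Notation lo := (lyap_lo al0 b0 e0 be sg et al la).
Local Notation hi := (lyap_hi al0 b0 e0 be sg et al la).
Local Notation rate := (decay_rate al0 b0 e0 be sg et al la).
Local Notation coeffs_ok_at X I A := (coeffs_ok al0 b0 e0 be al la (coef_a X) (coef_b X)
  (coef_g X) (I * coef_q X) (coef_l A) (coef_h1 X - coef_l A - d)).

Lemma lyap_constants_pos : 0 < al0 /\ 0 < b0 /\ 0 < e0 /\ 0 < be.
Proof.
  pose proof coef_a_Xbar_neg; pose proof coef_h_Xbar_neg; pose proof b0_pos;
  pose proof e0_pos; repeat split; lra.
Qed.

Lemma lo_pos : 0 < lo.
Proof. destruct lyap_constants_pos as [? [? [? ?]]]; apply lyap_lo_pos; assumption. Qed.

Lemma rate_pos : 0 < rate.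
Proof. destruct lyap_constants_pos as [? [? [? ?]]]; apply decay_rate_pos; assumption. Qed.

Lemma V_bounds x s i y : lo * sqnorm4 x s i y <= V x s i y <= hi * sqnorm4 x s i y.
Proof. destruct lyap_constants_pos as [? [? [? ?]]]; apply lyapV_bounds; assumption. Qed.

Lemma near_equilibrium_coeffs_ok : exists rho, 0 < rho /\ forall X I A,
  Rabs (X - Xb) < rho -> Rabs (I - Ib) < rho -> Rabs (A - Ab) < rho ->
  0 < X /\ coeffs_ok_at X I A.
Proof.
  destruct lyap_constants_pos as [Hal0 [Hb0 [He0 Hbe]]].
  pose proof (tol_xi_pos al0 b0 e0 Hal0 Hb0 He0) as Htol.
  set (eta := Rmin (Rmin (al0 / 2) (b0 / 2)) (Rmin (Rmin e0 (be / 2)) (tol / (b0 + e0)))).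
  assert (Heta : 0 < eta)
    by (apply Rmin4_pos; [lra|lra|apply Rmin_glb_lt; lra|apply Rdiv_lt_0_compat; lra]).
  destruct (Rmin4_le (al0 / 2) (b0 / 2) (Rmin e0 (be / 2)) (tol / (b0 + e0)))
    as [Heta_a [Heta_b [Heta_eh Heta_tol]]]; fold eta in Heta_a, Heta_b, Heta_eh, Heta_tol.
  pose proof (Rmin_l e0 (be / 2)); pose proof (Rmin_r e0 (be / 2)).
  destruct (coefficients_near eta Heta) as [rho [Hrho Hnear]].
  exists rho; split; [exact Hrho|]; intros X I A HX HI HA.
  destruct (Hnear X I A HX HI HA) as [HXpos [HApos [Ha [Hb [He Hh]]]]].
  apply Rabs_def2 in Ha, Hb, He, Hh.
  split; [exact HXpos|]; unfold coeffs_ok.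
  repeat split; try lra; try apply coef_g_bounds; try apply coef_l_bounds; try assumption.
  replace (b0 * (I * coef_q X) - e0 * coef_b X)
    with (b0 * (I * coef_q X - e0) - e0 * (coef_b X - b0)) by ring.
  assert (Htol_eta : (b0 + e0) * eta <= tol).
  { apply (Rmult_le_compat_l (b0 + e0)) in Heta_tol; [|lra].
    replace ((b0 + e0) * (tol / (b0 + e0))) with tol in Heta_tol by (field; lra); lra. }
  apply Rabs_le; split; nra.
Qed.

Lemma solution_lyapV_decay rho : 0 < rho ->
  (forall X I A, Rabs (X - Xb) < rho -> Rabs (I - Ib) < rho -> Rabs (A - Ab) < rho ->
     0 < X /\ coeffs_ok_at X I A) ->
  forall X S I A, is_solution p X S I A ->
  V (X 0 - Xb) (S 0) (I 0 - Ib) (A 0 - Ab) < lo * rho^2 ->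
  forall t, 0 <= t -> V (X t - Xb) (S t) (I t - Ib) (A t - Ab)
    <= V (X 0 - Xb) (S 0) (I 0 - Ib) (A 0 - Ab) * exp (- rate * t).
Proof.
  destruct lyap_constants_pos as [Hal0 [Hb0 [He0 Hbe]]]; pose proof lo_pos.
  intros Hrho Hnear X S I A [Hderiv [HX0 [HS0 [HI0 HA0]]]].
  apply (exp_decay (fun t => V (X t - Xb) (S t) (I t - Ib) (A t - Ab))
    (fun t => lyapV_deriv al0 b0 e0 be sg et al la
    (X t - Xb) (S t) (I t - Ib) (A t - Ab) (fX p (X t) (S t) (I t) (A t))
    (fS p (X t) (S t) (I t) (A t)) (fI p (X t) (S t) (I t) (A t))
    (fA p (X t) (S t) (I t) (A t)))).
  - exact rate_pos.
  - intros t Ht; destruct (Hderiv t Ht) as [HdX [HdS [HdI HdA]]].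
    exact (is_derive_lyapV al0 b0 e0 be sg et al la (fun t => X t - Xb) S
      (fun t => I t - Ib) (fun t => A t - Ab) t _ _ _ _ (is_derive_sub_const _ _ _ _ HdX) HdS
      (is_derive_sub_const _ _ _ _ HdI) (is_derive_sub_const _ _ _ _ HdA)).
  - unfold lyapV; right_cont0_tac.
  - destruct (V_bounds (X 0 - Xb) (S 0) (I 0 - Ib) (A 0 - Ab)) as [Hlow _].
    pose proof (sqnorm4_nonneg (X 0 - Xb) (S 0) (I 0 - Ib) (A 0 - Ab)).
    assert (0 <= lo * sqnorm4 (X 0 - Xb) (S 0) (I 0 - Ib) (A 0 - Ab))
      by (apply Rmult_le_pos; lra); lra.
  - intros t Ht Hv.
    destruct (V_bounds (X t - Xb) (S t) (I t - Ib) (A t - Ab)) as [Hlow _].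
    assert (Hsq : sqnorm4 (X t - Xb) (S t) (I t - Ib) (A t - Ab) < rho^2)
      by (apply (Rmult_lt_reg_l lo); lra).
    destruct (sqnorm4_ge (X t - Xb) (S t) (I t - Ib) (A t - Ab)) as [HsqX [_ [HsqI HsqA]]].
    destruct (Hnear (X t) (I t) (A t)) as [HXpos Hok];
      try (apply Rabs_lt_of_sq_lt; lra).
    rewrite (fX_error _ _ _ _ HXpos), fS_error, (fI_error _ _ _ _ HXpos), fA_error.
    apply lyapV_deriv_le_rate; assumption.
Qed.

Lemma E2_loc_asymp_stable : loc_asymp_stable p Xb 0 Ib Ab.
Proof.
  pose proof lo_pos; destruct near_equilibrium_coeffs_ok as [rho [Hrho Hnear]].
  apply (loc_asymp_stable_of_lyapunov p Xb 0 Ib Ab V lo hi rate (lo * rho^2)).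
  - assumption.
  - exact rate_pos.
  - pos.
  - exact V_bounds.
  - intros X S I A Hsol Hv0 t Ht; rewrite !Rminus_0_r in *.
    exact (solution_lyapV_decay rho Hrho Hnear X S I A Hsol Hv0 t Ht).
Qed.

End Model.

Theorem theorem4 (p : params) :
  0 < p_r p -> 0 < p_K p -> 0 < p_alpha p -> 0 < p_phi p -> 0 < p_c p ->
  0 < p_m1 p -> 0 < p_m2 p -> 0 < p_lambda p -> 0 < p_a p -> 0 < p_d p ->
  0 < p_delta p -> 0 < p_gamma p -> 0 < p_sigma p -> 0 < p_eta p ->
  p_phi p < 1 -> p_m2 p < p_m1 p ->
  p_d p + p_delta p < p_m2 p * p_phi p * p_alpha p * p_K p / (p_c p + p_K p) ->
  p_m1 p * (p_d p + p_delta p) * (p_a p + Abar p) /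
    ((p_a p + Abar p) * (p_lambda p + p_d p) - p_lambda p * p_a p)
    < p_m2 p * p_phi p ->
  p_m2 p * p_phi p < (p_K p + p_c p) * (p_d p + p_delta p) / (p_alpha p * (p_K p - p_c p)) ->
  loc_asymp_stable p (Xbar p) 0 (Ibar p) (Abar p).
Proof.
  intros; apply E2_loc_asymp_stable; assumption.
Qed.
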